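(* Let $\mathcal O$ be a phylogenetic quiver with evolutionary sequence $(\mathcal O_m,\le)_{m\ge0}$, $p:\mathcal O_m\to\mathcal O_{m-1}$. Let $a\in\mathcal O_m$, $b\in\mathcal O_n$ with $m,n\ge0$. Then: (i) $a\le b$ if and only if $m\le n$ and $a\le p^{n-m}(b)$ in $\mathcal O_m$ (where $p^0$ is the identity); (ii) if $m=n=0$, then $a\le b\iff a=b$; (iii) if $m=n\ge1$ and $a\le b$, then $p(a)=p(b)$; (iv) if $n=m+1$, then $p(b)=a$ if and only if there is an edge $B\to A$ in $\mathcal O$ with $A,B$ vertices of $\mathcal O$ representing $a,b$ respectively.
   Context: A quiver consists of a class of vertices and, for each ordered pair of vertices $(A,B)$, a set of edges $A\to B$ (loops and multiple edges allowed). An evolution of length $m\ge 0$ is a sequence $A_0\leftarrow A_1\leftarrow\cdots\leftarrow A_m$ of vertices together with edges $A_k\to A_{k-1}$ ($1\le k\le m$); $A_0$ is its initial and $A_m$ its terminal vertex. Write $A\le B$ ($A$ is an ancestor of $B$) if there is an evolution with initial vertex $A$ and terminal vertex $B$; $A,B$ are isotypic ($A\sim B$) if $A\le B$ and $B\le A$. A vertex $A$ is primitive if every ancestor of $A$ is isotypic to $A$. A full evolution for $X$ is an evolution with primitive initial vertex and terminal vertex $X$. The height $h(X)$ is the smallest length of a full evolution for $X$ ($\infty$ if none). An evolution $\alpha=(A_0\leftarrow\cdots\leftarrow A_m)$ embeds in $\beta=(B_0\leftarrow\cdots\leftarrow B_n)$ if $m\le n$ and there are $0\le r_0<\cdots<r_m\le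 n$ with $A_k\sim B_{r_k}$. A universal evolution for $X$ is a full evolution for $X$ embedding in every full evolution for $X$; $X$ is phylogenetic if one exists. A quiver is monotonous if $h(A)\ge h(B)$ for every edge $A\to B$; small if its isotypy classes form a set; phylogenetic if small, monotonous, and all vertices phylogenetic. Evolutionary sequence of a phylogenetic quiver $\mathcal O$: let $\mathcal O_m$ be the set of isotypy classes $[A]$ of vertices of height $m$, with the relation $[A]\le[B]$ iff $A\le B$ (a partial order on the set of all isotypy classes); for $m\ge1$ the parental map $p:\mathcal O_m\to\mathcal O_{m-1}$ is $p([A])=[A_{m-1}]$ where $A_0\leftarrow\cdots\leftarrow A_{m-1}\leftarrow A_m=A$ is any universal evolution for $A$ (this is well defined). *)

From Stdlib Require Import Arith.

Section Quiver.
Context {V : Type} (E : V -> V -> Type).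

(* An evolution A_0 <- A_1 <- ... <- A_m : length m, vertices vtx 0..vtx m,
   and for 1 <= k <= m an edge A_k -> A_{k-1}. (vtx beyond m is irrelevant.) *)
Record evolution := Evolution {
  len : nat;
  vtx : nat -> V;
  edg : forall k, k < len -> E (vtx (S k)) (vtx k)
}.

Definition initial (a : evolution) : V := vtx a 0.
Definition terminal (a : evolution) : V := vtx a (len a).

Definition ancestor (A B : V) : Prop :=
  exists a : evolution, initial a = A /\ terminal a = B.

Definition isotypic (A B : V) : Prop := ancestor A B /\ ancestor B A.

Definition primitive (A : V) : Prop :=
  forall B, ancestor B A -> isotypic B A.

Definition full_evolution (X : V) (a : evolution) : Prop :=
  primitive (initial a) /\ terminal a = X.

(* height E X m : h(X) = m (finite); h(X) = infinity iff no such m *)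
Definition height (X : V) (m : nat) : Prop :=
  (exists a, full_evolution X a /\ len a = m) /\
  (forall a, full_evolution X a -> m <= len a).

Definition embeds (a b : evolution) : Prop :=
  len a <= len b /\
  exists r : nat -> nat,
    (forall k, k < len a -> r k < r (S k)) /\
    r (len a) <= len b /\
    (forall k, k <= len a -> isotypic (vtx a k) (vtx b (r k))).

Definition universal_evolution (X : V) (a : evolution) : Prop :=
  full_evolution X a /\ forall b, full_evolution X b -> embeds a b.

Definition phylogenetic_vertex (X : V) : Prop :=
  exists a, universal_evolution X a.

(* h(A) >= h(B) for every edge A -> B (with the convention h = infinity
   when no full evolution exists) *)
Definition monotonous : Prop :=
  forall A B (e : E A B) m, height A m -> exists n, height B n /\ n <= m.

(* Smallness (isotypy classes form a set) is automatic for V : Type. *)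
Definition phylogenetic_quiver : Prop :=
  monotonous /\ forall X, phylogenetic_vertex X.

(* parental map on representatives: p([B]) = [C] iff C is isotypic to the
   penultimate vertex B_{n-1} of a universal evolution for B *)
Definition parent (B C : V) : Prop :=
  exists a, universal_evolution B a /\ 1 <= len a /\
            isotypic (vtx a (len a - 1)) C.

Fixpoint piter (k : nat) (B C : V) : Prop :=
  match k with
  | 0 => isotypic B C
  | S k' => exists D, parent B D /\ piter k' D C
  end.

End Quiver.

(* A universal evolution for Y embeds in every full evolution for Y, in particular in
   the one obtained by running a universal evolution for an ancestor X up to X and then
   continuing to Y.  Comparing heights along such an embedding shows that the universal
   evolutions of X and Y agree (up to isotypy) strictly below height h(X), and that the
   vertex of height h(X) on the universal evolution of Y lies above X.  Since the
   parental map reads off the penultimate vertex of a universal evolution, p^k sends Y to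
   the vertex of height h(Y) - k on its universal evolution, and all four statements
   follow. *)
From Stdlib Require Import Arith Lia.

Section Evolutions.
Context {V : Type} {E : V -> V -> Type}.

Local Notation evolution := (evolution E).
Local Notation len := (len E).
Local Notation vtx := (vtx E).
Local Notation ancestor := (ancestor E).
Local Notation isotypic := (isotypic E).

Definition trivial_evolution (A : V) : evolution :=
  Evolution E 0 (fun _ => A) (fun k Hk => False_rect _ (Nat.nlt_0_r k Hk)).

Definition edge_vtx (A B : V) (i : nat) : V := match i with 0 => A | _ => B end.

Lemma edge_evolution_edg (A B : V) (e : E B A) :
  forall k, k < 1 -> E (edge_vtx A B (S k)) (edge_vtx A B k).
Proof. intros [|k] Hk; [exact e | exfalso; lia]. Qed.

Definition edge_evolution (A B : V) (e : E B A) : evolution :=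
  Evolution E 1 (edge_vtx A B) (edge_evolution_edg A B e).

(* The vertices [vtx a i, ..., vtx a j]; indexing by [t + i] makes the edges
   typecheck by conversion. *)
Definition subevolution (a : evolution) (i j : nat) (Hj : j <= len a) : evolution :=
  Evolution E (j - i) (fun t => vtx a (t + i))
    (fun k Hk => edg E a (k + i) ltac:(lia)).

Definition concat_vtx (a b : evolution) (i : nat) : V :=
  if i <=? len a then vtx a i else vtx b (i - len a).

Lemma concat_vtx_l a b i : i <= len a -> concat_vtx a b i = vtx a i.
Proof. intros Hi. unfold concat_vtx. destruct (Nat.leb_spec0 i (len a)); [easy | lia]. Qed.

Lemma concat_vtx_r a b i :
  terminal E a = initial E b -> len a <= i -> concat_vtx a b i = vtx b (i - len a).
Proof.
  intros Hab Hi. unfold concat_vtx. destruct (Nat.leb_spec0 i (len a)).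
  - replace i with (len a) by lia. now rewrite Nat.sub_diag.
  - reflexivity.
Qed.

Lemma concat_edg (a b : evolution) (Hab : terminal E a = initial E b) :
  forall k, k < len a + len b -> E (concat_vtx a b (S k)) (concat_vtx a b k).
Proof.
  intros k Hk. destruct (lt_dec k (len a)) as [Hka | Hka].
  - rewrite !concat_vtx_l by lia. exact (edg E a k Hka).
  - rewrite !concat_vtx_r by (auto; lia).
    replace (S k - len a) with (S (k - len a)) by lia. refine (edg E b _ _); lia.
Qed.

Definition concat (a b : evolution) (Hab : terminal E a = initial E b) : evolution :=
  Evolution E (len a + len b) (concat_vtx a b) (concat_edg a b Hab).

Lemma concat_initial a b Hab : initial E (concat a b Hab) = initial E a.
Proof. apply concat_vtx_l. lia. Qed.

Lemma concat_terminal a b Hab : terminal E (concat a b Hab) = terminal E b.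
Proof.
  unfold terminal at 1; simpl. rewrite concat_vtx_r by (auto; lia).
  unfold terminal. f_equal. lia.
Qed.

Lemma ancestor_refl A : ancestor A A.
Proof. now exists (trivial_evolution A). Qed.

Lemma ancestor_trans A B C : ancestor A B -> ancestor B C -> ancestor A C.
Proof.
  intros [a [Ha HaB]] [b [HbB Hb]].
  assert (Hab : terminal E a = initial E b) by congruence.
  exists (concat a b Hab). now rewrite concat_initial, concat_terminal.
Qed.

Lemma ancestor_vtx (a : evolution) i j : i <= j -> j <= len a -> ancestor (vtx a i) (vtx a j).
Proof.
  intros Hij Hj. exists (subevolution a i j Hj).
  unfold initial, terminal; simpl. split; f_equal; lia.
Qed.

Lemma isotypic_refl A : isotypic A A.
Proof. split; apply ancestor_refl. Qed.

Lemma isotypic_sym A B : isotypic A B -> isotypic B A.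
Proof. now intros []. Qed.

Lemma isotypic_trans A B C : isotypic A B -> isotypic B C -> isotypic A C.
Proof. intros [] []; split; eapply ancestor_trans; eauto. Qed.

End Evolutions.

Lemma increasing_gap (r : nat -> nat) n :
  (forall k, k < n -> r k < r (S k)) ->
  forall k j, k <= j -> j <= n -> r k + (j - k) <= r j.
Proof.
  intros Hr k j Hkj Hjn. induction j as [|j IH].
  - replace k with 0 by lia. lia.
  - destruct (Nat.eq_dec k (S j)) as [->|].
    + rewrite Nat.sub_diag. lia.
    + specialize (IH ltac:(lia) ltac:(lia)). specialize (Hr j ltac:(lia)). lia.
Qed.

Section Phylogeny.
Context {V : Type} {E : V -> V -> Type}.

Local Notation len := (len E).
Local Notation vtx := (vtx E).
Local Notation ancestor := (ancestor E).
Local Notation isotypic := (isotypic E).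
Local Notation height := (height E).
Local Notation full := (full_evolution E).
Local Notation universal := (universal_evolution E).

Lemma height_unique X m m' : height X m -> height X m' -> m = m'.
Proof.
  intros [[a [Ha <-]] Hm] [[b [Hb <-]] Hm'].
  specialize (Hm b Hb). specialize (Hm' a Ha). lia.
Qed.

Lemma height_0_primitive X : height X 0 -> primitive E X.
Proof.
  intros [[a [[Hprim Ha] Hlen]] _].
  unfold initial, terminal in *. rewrite Hlen in Ha. now rewrite <- Ha.
Qed.

Lemma universal_height X a : universal X a -> height X (len a).
Proof.
  intros [Ha Hu]. split.
  - now exists a.
  - intros b Hb. apply (Hu b Hb).
Qed.

Lemma universal_terminal X a : universal X a -> vtx a (len a) = X.
Proof. intros [[_ Ha] _]. exact Ha. Qed.

Lemma universal_vtx_ancestor Y y k : universal Y y -> k <= len y -> ancestor (vtx y k) Y.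
Proof.
  intros Hy Hk. rewrite <- (universal_terminal Y y Hy). now apply ancestor_vtx.
Qed.

Lemma universal_len X a m : universal X a -> height X m -> len a = m.
Proof. intros Ha Hm. eapply height_unique; [apply universal_height|]; eauto. Qed.

Lemma universal_through Y y c j :
  universal Y y -> full Y c -> j <= len y ->
  exists i, j <= i /\ i + (len y - j) <= len c /\ isotypic (vtx y j) (vtx c i).
Proof.
  intros [_ Hu] Hc Hj.
  destruct (Hu c Hc) as [_ [r [Hr [Hrlen Hriso]]]].
  pose proof (increasing_gap r _ Hr 0 j ltac:(lia) Hj).
  pose proof (increasing_gap r _ Hr j (len y) Hj (le_n _)).
  exists (r j). split; [lia | split; [lia | exact (Hriso j Hj)]].
Qed.

Lemma universal_vtx_height X a k : universal X a -> k <= len a -> height (vtx a k) k.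
Proof.
  intros Ha Hk. split.
  - exists (subevolution a 0 k Hk). split; [split|]; simpl.
    + apply Ha.
    + unfold terminal; simpl. f_equal. lia.
    + lia.
  - intros d [Hd Hdk].
    set (s := subevolution a k (len a) (le_n _)).
    set (c := concat d s Hdk).
    assert (Hc : full X c).
    { split; unfold c.
      - now rewrite concat_initial.
      - rewrite concat_terminal, <- (universal_terminal X a Ha).
        unfold terminal; simpl. f_equal. lia. }
    pose proof (proj2 (universal_height X a Ha) c Hc). simpl in *. lia.
Qed.

Lemma universal_parent B b : universal B b -> 1 <= len b -> parent E B (vtx b (len b - 1)).
Proof. intros Hb Hlen. exists b. split; [exact Hb | split; [exact Hlen | apply isotypic_refl]]. Qed.

Lemma parent_edge B C :
  parent E B C -> exists (C' B' : V) (_ : E B' C'), isotypic C' C /\ isotypic B' B.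
Proof.
  intros [c [Hc [Hlen HC]]].
  exists (vtx c (len c - 1)), (vtx c (S (len c - 1))), (edg E c (len c - 1) ltac:(lia)).
  split; [exact HC|].
  replace (S (len c - 1)) with (len c) by lia.
  rewrite (universal_terminal _ c Hc). apply isotypic_refl.
Qed.

Lemma universal_edge A B a b (e : E B A) :
  universal A a -> universal B b -> len b = S (len a) -> isotypic (vtx b (len a)) A.
Proof.
  intros Ha Hb Hlen.
  assert (Hae : terminal E a = initial E (edge_evolution A B e)) by apply Ha.
  set (c := concat a _ Hae).
  assert (Hc : full B c).
  { split; unfold c; [rewrite concat_initial; apply Ha | now rewrite concat_terminal]. }
  destruct (universal_through B b c (len a) Hb Hc ltac:(lia)) as [i [Hi [Hic Hiso]]].
  simpl in Hic. replace i with (len a) in Hiso by lia.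
  unfold c in Hiso; simpl in Hiso. rewrite concat_vtx_l in Hiso by lia.
  now rewrite (universal_terminal _ a Ha) in Hiso.
Qed.

Context (HO : phylogenetic_quiver E).

Lemma universal_exists X : exists a, universal X a.
Proof. apply HO. Qed.

Lemma ancestor_height X Y m n : ancestor X Y -> height X m -> height Y n -> m <= n.
Proof.
  intros [c [<- <-]] HX. unfold terminal.
  assert (Hvtx : forall i, i <= len c -> forall k, height (vtx c i) k -> m <= k).
  { induction i as [|i IH]; intros Hi k Hk.
    - rewrite (height_unique _ _ _ HX Hk). lia.
    - destruct (proj1 HO _ _ (edg E c i ltac:(lia)) k Hk) as [k' [Hk' Hle]].
      specialize (IH ltac:(lia) k' Hk'). lia. }
  intros Hn. exact (Hvtx _ (le_n _) n Hn).
Qed.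

Lemma isotypic_height X Y m n : isotypic X Y -> height X m -> height Y n -> m = n.
Proof.
  intros [HXY HYX] HX HY.
  pose proof (ancestor_height X Y m n HXY HX HY).
  pose proof (ancestor_height Y X n m HYX HY HX). lia.
Qed.

(* Embed [y] into [x] followed by an evolution from X to Y: the image of vertex [j]
   lies either on [x] or above X. *)
Lemma universal_ancestor_cases X Y x y j :
  ancestor X Y -> universal X x -> universal Y y -> j <= len x ->
  exists i, j <= i /\
    ((i <= len x /\ isotypic (vtx y j) (vtx x i)) \/ ancestor X (vtx y j)).
Proof.
  intros [g [Hg Hgt]] Hx Hy Hj.
  assert (Hxg : terminal E x = initial E g) by now rewrite Hg; apply Hx.
  set (c := concat x g Hxg).
  assert (Hc : full Y c).
  { split; unfold c; [rewrite concat_initial; apply Hx | now rewrite concat_terminal]. }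
  assert (Hlen : len x <= len y).
  { eapply ancestor_height; [exists g; eauto | apply universal_height..]; eauto. }
  destruct (universal_through Y y c j Hy Hc ltac:(lia)) as [i [Hji [Hic Hiso]]].
  exists i. split; [exact Hji|].
  destruct (Nat.le_gt_cases i (len x)) as [Hi | Hi].
  - left. unfold c in Hiso; simpl in Hiso. now rewrite concat_vtx_l in Hiso.
  - right. apply ancestor_trans with (vtx c i); [|apply Hiso].
    replace X with (vtx c (len x)).
    + apply ancestor_vtx; simpl in *; lia.
    + unfold c; simpl. rewrite concat_vtx_l by lia. apply Hx.
Qed.

Lemma universal_ancestor_vtx X Y y m :
  ancestor X Y -> height X m -> universal Y y -> ancestor X (vtx y m).
Proof.
  intros HXY HX Hy. destruct (universal_exists X) as [x Hx].
  rewrite <- (universal_len X x m Hx HX).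
  destruct (universal_ancestor_cases X Y x y (len x) HXY Hx Hy (le_n _))
    as [i [Hi [[Hix Hiso] | Hanc]]]; [|exact Hanc].
  replace i with (len x) in Hiso by lia.
  rewrite (universal_terminal X x Hx) in Hiso. apply Hiso.
Qed.

Lemma universal_ancestor_isotypic X Y x y j :
  ancestor X Y -> universal X x -> universal Y y -> j < len x ->
  isotypic (vtx x j) (vtx y j).
Proof.
  intros HXY Hx Hy Hj.
  assert (Hlen : len x <= len y).
  { eapply ancestor_height; [exact HXY | apply universal_height..]; eauto. }
  pose proof (universal_vtx_height Y y j Hy ltac:(lia)) as Hyj.
  destruct (universal_ancestor_cases X Y x y j HXY Hx Hy ltac:(lia))
    as [i [Hji [[Hix Hiso] | Hanc]]].
  - pose proof (universal_vtx_height X x i Hx Hix) as Hxi.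
    rewrite <- (isotypic_height _ _ _ _ Hiso Hyj Hxi) in Hiso.
    now apply isotypic_sym.
  - pose proof (ancestor_height _ _ _ _ Hanc (universal_height X x Hx) Hyj). lia.
Qed.

Lemma universal_prefix X Y x y l :
  universal Y y -> l <= len y -> universal X x -> isotypic X (vtx y l) ->
  len x = l /\ forall j, j <= l -> isotypic (vtx x j) (vtx y j).
Proof.
  intros Hy Hl Hx HX.
  assert (Hlen : len x = l).
  { eapply isotypic_height;
      [exact HX | apply (universal_height X x Hx) | exact (universal_vtx_height Y y l Hy Hl)]. }
  split; [exact Hlen|]. intros j Hj.
  destruct (Nat.eq_dec j l) as [-> | Hjl].
  - rewrite <- Hlen at 1. now rewrite (universal_terminal X x Hx).
  - apply universal_ancestor_isotypic with X Y; auto; [|lia].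
    apply ancestor_trans with (vtx y l); [apply HX | now apply universal_vtx_ancestor].
Qed.

Lemma universal_edge_isotypic A B A' B' b m (e : E B' A') :
  isotypic A' A -> isotypic B' B -> height A m -> universal B b -> len b = S m ->
  isotypic (vtx b m) A.
Proof.
  intros HA HB hA Hb Hlb.
  destruct (universal_exists A') as [a' Ha'].
  destruct (universal_exists B') as [b' Hb'].
  assert (Hla' : len a' = m) by exact (isotypic_height _ _ _ _ HA (universal_height _ _ Ha') hA).
  destruct (universal_prefix B' B b' b (len b) Hb (le_n _) Hb'
              ltac:(now rewrite (universal_terminal _ b Hb))) as [Hlb' Hiso].
  eapply isotypic_trans; [apply isotypic_sym, Hiso; lia|].
  rewrite <- Hla'. eapply isotypic_trans; [|exact HA].
  apply (universal_edge A' B' a' b' e); auto; lia.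
Qed.

Lemma parent_isotypic B C b :
  parent E B C -> universal B b -> isotypic C (vtx b (len b - 1)).
Proof.
  intros [a [Ha [_ HC]]] Hb.
  destruct (universal_prefix B B a b (len b) Hb (le_n _) Ha
              ltac:(rewrite (universal_terminal _ b Hb); apply isotypic_refl)) as [Hab Hiso].
  rewrite <- Hab.
  eapply isotypic_trans; [apply isotypic_sym, HC | apply Hiso; lia].
Qed.

Lemma piter_isotypic k : forall B b C, universal B b -> k <= len b ->
  (piter E k B C <-> isotypic C (vtx b (len b - k))).
Proof.
  induction k as [|k IH]; intros B b C Hb Hk; simpl.
  - rewrite Nat.sub_0_r, (universal_terminal _ b Hb). split; apply isotypic_sym.
  - split.
    + intros [D [HD HDC]].
      pose proof (parent_isotypic B D b HD Hb) as HDb.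
      destruct (universal_exists D) as [d Hd].
      destruct (universal_prefix D B d b (len b - 1) Hb ltac:(lia) Hd HDb) as [Hlen Hiso].
      apply (IH D d C Hd ltac:(lia)) in HDC.
      eapply isotypic_trans; [exact HDC|].
      replace (len b - S k) with (len d - k) by lia. apply Hiso. lia.
    + intros HC. exists (vtx b (len b - 1)). split.
      * apply universal_parent; auto; lia.
      * destruct (universal_exists (vtx b (len b - 1))) as [d Hd].
        destruct (universal_prefix _ B d b (len b - 1) Hb ltac:(lia) Hd
                    (isotypic_refl _)) as [Hlen Hiso].
        apply (IH _ d C Hd ltac:(lia)).
        eapply isotypic_trans; [exact HC|].
        replace (len b - S k) with (len d - k) by lia. apply isotypic_sym, Hiso. lia.
Qed.

End Phylogeny.

Theorem theorem7p1 (V : Type) (E : V -> V -> Type)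
  (HO : phylogenetic_quiver E) (A B : V) (m n : nat)
  (hA : height E A m) (hB : height E B n) :
  (* (i) *)
  (ancestor E A B <->
     m <= n /\ exists C, piter E (n - m) B C /\ ancestor E A C) /\
  (* (ii) *)
  (m = 0 -> n = 0 -> (ancestor E A B <-> isotypic E A B)) /\
  (* (iii) *)
  (m = n -> 1 <= m -> ancestor E A B ->
     forall C D, parent E A C -> parent E B D -> isotypic E C D) /\
  (* (iv) *)
  (n = S m ->
     ((exists C, parent E B C /\ isotypic E C A) <->
      exists (A' B' : V) (_ : E B' A'), isotypic E A' A /\ isotypic E B' B)).
Proof.
  destruct (universal_exists HO A) as [a Ha].
  destruct (universal_exists HO B) as [b Hb].
  pose proof (universal_len A a m Ha hA) as Hla.
  pose proof (universal_len B b n Hb hB) as Hlb.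
  assert (Hpiter : m <= n -> forall C, piter E (n - m) B C <-> isotypic E C (vtx E b m)).
  { intros Hmn C. replace m with (len E b - (n - m)) at 2 by lia.
    apply piter_isotypic; auto; lia. }
  split; [|split; [|split]].
  - split.
    + intros HAB. pose proof (ancestor_height HO A B m n HAB hA hB) as Hmn.
      split; [exact Hmn|].
      exists (vtx E b m). rewrite (Hpiter Hmn). split; [apply isotypic_refl|].
      exact (universal_ancestor_vtx HO A B b m HAB hA Hb).
    + intros [Hmn [C [HC HAC]]]. apply (Hpiter Hmn) in HC.
      apply ancestor_trans with C; [exact HAC|].
      apply ancestor_trans with (vtx E b m); [apply HC | apply universal_vtx_ancestor; auto; lia].
  - intros -> ->. split; [|now intros []].
    intros HAB. exact (height_0_primitive B hB A HAB).
  - intros <- Hm HAB C D HC HD.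
    pose proof (parent_isotypic HO A C a HC Ha) as HCa.
    pose proof (parent_isotypic HO B D b HD Hb) as HDb.
    eapply isotypic_trans; [exact HCa|]. rewrite Hla, <- Hlb.
    eapply isotypic_trans; [|apply isotypic_sym; exact HDb].
    apply (universal_ancestor_isotypic HO A B a b); auto; lia.
  - intros ->. split.
    + intros [C [HC HCA]].
      destruct (parent_edge B C HC) as [C' [B' [e [HC' HB']]]].
      exists C', B', e. split; [eapply isotypic_trans; eauto | exact HB'].
    + intros [A' [B' [e [HA' HB']]]]. exists (vtx E b m). split.
      * replace m with (len E b - 1) by lia. apply universal_parent; auto; lia.
      * apply (universal_edge_isotypic HO A B A' B' b m e); auto.
Qed.
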